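(* Let $S\subseteq\mathbb{R}^+\cup\{0\}$ with $S\neq\emptyset$, and let $\mathbf{P}=(X,P)$ be a finite poset belonging to $C(S)$. (1) If $\mathbf{P}$ has a twin-free $S$-representation, then $\mathbf{P}$ has a distinguishing $S$-representation. (2) If $0\notin S$, then $\mathbf{P}$ has a distinguishing $S$-representation.
   Context: An interval representation of a poset $(X,P)$ assigns to each $x\in X$ a closed real interval $[l_x,r_x]$ (with $l_x\le r_x$; length $r_x-l_x$, possibly $0$) such that for all $x,y\in X$: $x<y$ in $P$ if and only if $r_x<l_y$. For $S\subseteq\mathbb{R}^+\cup\{0\}$, an $S$-representation is an interval representation in which every interval length lies in $S$, and $C(S)$ is the class of posets having an $S$-representation. A representation is twin-free if no two distinct elements of $X$ are assigned the same interval. A representation is distinguishing if every real number occurs at most once as an endpoint of an interval of the representation, i.e. no two intervals share an endpoint. *)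

From HB Require Import structures.
From mathcomp Require Import all_boot all_order all_algebra.
From mathcomp Require Import reals.
Set Implicit Arguments. Unset Strict Implicit. Unset Printing Implicit Defensive.
Import Order.TTheory GRing.Theory Num.Theory.
Local Open Scope ring_scope.

(* A poset (X,P) is a finite partially ordered type X; x < y in P is (x < y)%O.
   An interval representation assigns to x the closed interval [l x, r x]. *)
Definition interval_rep (R : realType) (d : Order.disp_t) (X : finPOrderType d)
  (l r : X -> R) : Prop :=
  (forall x, l x <= r x) /\ (forall x y : X, (x < y)%O <-> r x < l y).

Definition S_rep (R : realType) (d : Order.disp_t) (X : finPOrderType d)
  (S : R -> Prop) (l r : X -> R) : Prop :=
  interval_rep l r /\ (forall x, S (r x - l x)).

Definition in_C (R : realType) (d : Order.disp_t) (X : finPOrderType d)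
  (S : R -> Prop) : Prop :=
  exists l r : X -> R, S_rep S l r.

Definition twin_free (R : realType) (d : Order.disp_t) (X : finPOrderType d)
  (l r : X -> R) : Prop :=
  forall x y : X, l x = l y -> r x = r y -> x = y.

Definition distinguishing (R : realType) (d : Order.disp_t) (X : finPOrderType d)
  (l r : X -> R) : Prop :=
  forall x y : X, x <> y ->
    [/\ l x <> l y, l x <> r y, r x <> l y & r x <> r y].

From HB Require Import structures.
From mathcomp Require Import all_boot all_order all_algebra.
From mathcomp Require Import reals filter topology.
From mathcomp Require Import ring lra.
Set Implicit Arguments. Unset Strict Implicit. Unset Printing Implicit Defensive.
Import Order.TTheory GRing.Theory Num.Theory numFieldTopology.Exports.
Local Open Scope classical_set_scope.
Local Open Scope ring_scope.

(* Translate each interval x by -e * t x, where t is injective and increases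
   along touching pairs (r x = l y, x <> y).  Lengths are unchanged, and for
   small e > 0 every strict comparison between endpoints survives, coincident
   endpoints of distinct intervals are pulled apart, and touching pairs start
   to overlap, so the order is unchanged.  Such a t exists (perturb the
   midpoint by a small multiple of an enumeration rank) as soon as midpoints
   increase along touching pairs, which holds for twin-free representations
   and for representations with positive lengths. *)

Section SmallShifts.
Variable R : realType.

Lemma near_ltr_perturb (a b c d : R) :
  \forall e \near 0^'+, a < b -> a - e * c < b - e * d.
Proof.
have [ab|_] := ltP a b; last exact: nearW.
have cd1 : 0 < `|d - c| + 1 by rewrite ltr_pwDr.
near=> e => _.
have e0 : 0 < e by near: e; exact: nbhs_right_gt.
have : e < (b - a) / (`|d - c| + 1).
  by near: e; apply: nbhs_right_lt; rewrite divr_gt0 // subr_gt0.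
rewrite ltr_pdivlMr //.
have : e * (d - c) <= e * `|d - c| by rewrite ler_pM2l // ler_norm.
nra.
Unshelve. all: by end_near. Qed.

Lemma injective_refinement (T : finType) (f : T -> R) :
  exists2 t : T -> R, injective t & forall x y, f x < f y -> t x < t y.
Proof.
pose k (x : T) : R := (enum_rank x)%:R.
have k_inj : injective k.
  by move=> x y /eqP; rewrite eqr_nat => /eqP /val_inj /enum_rank_inj.
near (0 : R)^'+ => eta.
have eta0 : 0 < eta by near: eta; exact: nbhs_right_gt.
have t_mono : forall p : T * T, f p.1 < f p.2 ->
    f p.1 - eta * k p.1 < f p.2 - eta * k p.2.
  by near: eta; apply: filter_forall => p; exact: near_ltr_perturb.
exists (fun x => f x - eta * k x) => [x y txy|x y fxy]; last exact: (t_mono (x, y)).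
have [fxy|fyx|fxy] := ltgtP (f x) (f y).
- by have := t_mono (x, y) fxy; rewrite txy ltxx.
- by have := t_mono (y, x) fyx; rewrite txy ltxx.
- apply: k_inj; apply: (mulfI (lt0r_neq0 eta0)).
  by move: txy; rewrite fxy => /addrI /oppr_inj.
Unshelve. all: by end_near. Qed.

End SmallShifts.

Section IntervalRepresentations.
Variables (R : realType) (d : Order.disp_t) (X : finPOrderType d).

Definition mid_increasing_on_touching (l r : X -> R) :=
  forall x y, x != y -> r x = l y -> l x + r x < l y + r y.

Section Shift.
Variables (l r t : X -> R).
Hypotheses (lr_rep : interval_rep l r) (t_inj : injective t)
  (t_touch : forall x y, x != y -> r x = l y -> t x < t y).

Lemma shifted_distinguishing_rep :
  exists l' r' : X -> R, [/\ interval_rep l' r', distinguishing l' r'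
    & forall x, r' x - l' x = r x - l x].
Proof.
have [l_le_r ltE] := lr_rep.
pose p (u : X * bool) := if u.2 then r u.1 else l u.1.
near (0 : R)^'+ => e.
have e0 : 0 < e by near: e; exact: nbhs_right_gt.
have p_stable : forall uv : (X * bool) * (X * bool), p uv.1 < p uv.2 ->
    p uv.1 - e * t uv.1.1 < p uv.2 - e * t uv.2.1.
  by near: e; apply: filter_forall => uv; exact: near_ltr_perturb.
have p_sep : forall u v, u.1 != v.1 -> p u - e * t u.1 != p v - e * t v.1.
  move=> u v uv; have [puv|pvu|->] := ltgtP (p u) (p v).
  - by rewrite lt_eqF // (p_stable (u, v)).
  - by rewrite gt_eqF // (p_stable (v, u)).
  - by rewrite (can_eq (addKr _)) eqr_opp (inj_eq (mulfI (lt0r_neq0 e0))) (inj_eq t_inj).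
exists (fun x => l x - e * t x), (fun x => r x - e * t x); split=> [||x]; last by ring.
- split=> [x|x y]; first by rewrite lerD2r.
  rewrite ltE; split=> [rl|]; first exact: (p_stable ((x, true), (y, false))).
  have [//|ly_lt_rx|rl] := ltgtP (r x) (l y).
    by move=> /(lt_trans (p_stable ((y, false), (x, true)) ly_lt_rx)); rewrite ltxx.
  have [xy|xy] := eqVneq x y; first by subst y; rewrite ltrD2r rl ltxx.
  by rewrite rl ltrD2l ltrN2 ltr_pM2l // => /(lt_trans (t_touch xy rl)); rewrite ltxx.
- move=> x y /eqP xy.
  by split; apply/eqP; [ apply: (p_sep (x, false) (y, false))
    | apply: (p_sep (x, false) (y, true)) | apply: (p_sep (x, true) (y, false))
    | apply: (p_sep (x, true) (y, true))].
Unshelve. all: by end_near. Qed.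

End Shift.

Lemma distinguishing_S_rep (S : R -> Prop) (l r : X -> R) :
  S_rep S l r -> mid_increasing_on_touching l r ->
  exists l' r' : X -> R, S_rep S l' r' /\ distinguishing l' r'.
Proof.
move=> [rep inS] mid_touch.
have [t t_inj t_mono] := injective_refinement (fun x => l x + r x).
have t_touch x y (xy : x != y) (rl : r x = l y) : t x < t y.
  exact/t_mono/mid_touch.
have [l' [r' [rep' dist' len']]] := shifted_distinguishing_rep rep t_inj t_touch.
by exists l', r'; split=> //; split=> // x; rewrite len'.
Qed.

Lemma twin_free_mid_increasing (l r : X -> R) :
  interval_rep l r -> twin_free l r -> mid_increasing_on_touching l r.
Proof.
move=> [l_le_r _] tf x y /eqP xy rl.
have := l_le_r x; have := l_le_r y.
have [//|mid_ge ly_ry lx_rx] := ltP (l x + r x) (l y + r y).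
by case: xy; apply: tf; lra.
Qed.

Lemma pos_length_mid_increasing (l r : X -> R) :
  (forall x, l x < r x) -> mid_increasing_on_touching l r.
Proof. by move=> lt_lr x y _ rl; have := lt_lr x; have := lt_lr y; lra. Qed.

End IntervalRepresentations.

Theorem theorem3p2 (R : realType) (d : Order.disp_t) (X : finPOrderType d)
  (S : R -> Prop) :
  (exists s, S s) ->
  (forall s, S s -> 0 <= s) ->
  in_C X S ->
  ((exists l r : X -> R, S_rep S l r /\ twin_free l r) ->
     exists l r : X -> R, S_rep S l r /\ distinguishing l r) /\
  (~ S 0 ->
     exists l r : X -> R, S_rep S l r /\ distinguishing l r).
Proof.
move=> _ S_ge0 [l0 [r0 rep0]]; split.
  move=> [l [r [rep tf]]]; apply: (distinguishing_S_rep rep).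
  exact: twin_free_mid_increasing (proj1 rep) tf.
move=> S0; apply: (distinguishing_S_rep rep0).
have [_ inS] := rep0.
apply: pos_length_mid_increasing => x.
rewrite -subr_gt0 lt_def S_ge0 ?inS // andbT.
by apply/eqP => len0; apply: S0; rewrite -len0.
Qed.
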